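(* For every surjective $\boxplus$-morphism $\phi:[1]^{m+n+1}\to[1]^{n+1}$ there exist monotone functions $\phi_i:[1]^{k_i}\to[1]$, $1\leq i\leq n+1$, with $k_1+\cdots+k_{n+1}=m+n+1$, and a coordinate permutation $g$ of $[1]^{m+n+1}$ such that $\phi=(\phi_1\times\phi_2\times\cdots\times\phi_{n+1})\circ g$.
   Context: $[1]=\{0<1\}$, $[1]^n$ the product poset ($[1]^0=[0]$). An interval in a poset is a non-empty subset $[x,z]=\{y:x\leq y\leq z\}$. $\boxplus$ is the category whose objects are the $[1]^n$ ($n\geq0$) and whose morphisms are the monotone functions mapping every interval onto an interval. $\phi_1\times\cdots\times\phi_{n+1}:[1]^{k_1+\cdots+k_{n+1}}\to[1]^{n+1}$ is the Cartesian product of functions. *)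

From mathcomp Require Import all_boot all_order. From mathcomp Require Import fingroup perm.
Set Implicit Arguments. Unset Strict Implicit. Unset Printing Implicit Defensive.

(* The poset [1]^n is modelled as {ffun 'I_n -> bool} (false = 0 < true = 1),
   ordered coordinatewise. [1]^0 = 'I_0 -> bool has exactly one point. *)
Definition cube (n : nat) := {ffun 'I_n -> bool}.

Definition cle (n : nat) (x y : cube n) : Prop := forall i, x i <= y i.

Definition monotone_cube (n p : nat) (f : cube n -> cube p) : Prop :=
  forall x y, cle x y -> cle (f x) (f y).

Definition monotone_bit (n : nat) (f : cube n -> bool) : Prop :=
  forall x y, cle x y -> f x <= f y.

Definition in_interval (n : nat) (a b y : cube n) : Prop := cle a y /\ cle y b.

Definition box_morphism (n p : nat) (f : cube n -> cube p) : Prop :=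
  monotone_cube f /\
  forall x z, cle x z ->
    exists a b, cle a b /\
      forall y, (exists w, in_interval x z w /\ f w = y) <-> in_interval a b y.

(* nat-indexed access to coordinates (default false outside the range) *)
Definition getn (N : nat) (x : cube N) (p : nat) : bool :=
  match @insub nat (fun q => q < N) 'I_N p with Some i => x i | None => false end.

Definition offset (r : nat) (k : 'I_r -> nat) (i : 'I_r) : nat :=
  \sum_(j < r | (j < i)%N) k j.

Definition block (N r : nat) (k : 'I_r -> nat) (i : 'I_r) (x : cube N) : cube (k i) :=
  [ffun j : 'I_(k i) => getn x (offset k i + j)].

(* Cartesian product phi_1 x ... x phi_r : [1]^(k_1+...+k_r) -> [1]^r
   (used when \sum_i k i = N) *)
Definition cprod (N r : nat) (k : 'I_r -> nat)
    (phis : forall i : 'I_r, cube (k i) -> bool) (x : cube N) : cube r :=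
  [ffun i => phis i (block k i x)].

Definition coord_perm (N : nat) (s : {perm 'I_N}) (x : cube N) : cube N :=
  [ffun j => x (s j)].

(* Say that input coordinate c influences output coordinate a of f when, at
   some point p, raising p_c from 0 to 1 switches f(p)_a from 0 to 1.  For
   monotone f, f(x)_a only depends on the coordinates influencing a.  For a box
   morphism, every coordinate influences at most one output: if raising c
   switches output a on at p and output b <> a on at p', then the interval
   condition yields a preimage of f(p + e_c) with its b-th entry lowered
   (between p /\ p' and p + e_c), or of f(p) with its b-th entry raised
   (between p and (p \/ p') + e_c), which is again a switching point for a,
   lies between p and p', and is strictly closer to p' in Hamming distance.
   Sorting the coordinates into consecutive blocks by the output they influence
   gives the permutation, and phi_a(z) is the a-th output of f at the point
   carrying z on block a and 0 elsewhere. *)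

From mathcomp Require Import all_boot all_order. From mathcomp Require Import fingroup perm.
Set Implicit Arguments. Unset Strict Implicit. Unset Printing Implicit Defensive.

Definition setc N (x : cube N) (c : 'I_N) (b : bool) : cube N :=
  [ffun i => if i == c then b else x i].

Lemma setcE N (x : cube N) c b i : setc x c b i = if i == c then b else x i.
Proof. by rewrite ffunE. Qed.

Lemma setc_id N (x : cube N) c : setc x c (x c) = x.
Proof. by apply/ffunP=> i; rewrite setcE; case: eqP => [->|]. Qed.

Lemma setcK N (x : cube N) c b b' : setc (setc x c b) c b' = setc x c b'.
Proof. by apply/ffunP=> i; rewrite !setcE; case: eqP. Qed.

Lemma cle_setcT N (x : cube N) c : cle x (setc x c true).
Proof. by move=> i; rewrite setcE; case: eqP => // _; apply: leq_b1. Qed.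

Lemma cle_setc N (x y : cube N) c b : cle x y -> cle (setc x c b) (setc y c b).
Proof. by move=> le_xy i; rewrite !setcE; case: eqP. Qed.

Definition between N (p q w : cube N) := forall i, (w i == p i) || (w i == q i).

Definition hamming N (x y : cube N) := #|[pred i | x i != y i]|.

Lemma hamming_between_lt N (p q w : cube N) :
  between p q w -> w != p -> hamming w q < hamming p q.
Proof.
move=> btw neq_wp; apply: proper_card; apply/properP; split.
  by apply/subsetP=> i; rewrite !inE; move: (btw i); case: (w i) (p i) (q i) => [] [] [].
have [i neq_i | eq_wp] := pickP (fun i => w i != p i); last first.
  by case/eqP: neq_wp; apply/ffunP=> i; apply/eqP/negbFE/eq_wp.
by exists i; rewrite !inE; move: (btw i) neq_i; case: (w i) (p i) (q i) => [] [] [].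
Qed.

Lemma box_morphism_interval N r (f : cube N -> cube r) x z y :
  box_morphism f -> cle x z -> cle (f x) y -> cle y (f z) ->
  exists w, [/\ cle x w, cle w z & f w = y].
Proof.
case=> _ f_int le_xz le_fx_y le_y_fz.
have [a [b [_ img]]] := f_int x z le_xz.
have [[le_a_fx _] [_ le_fz_b]] : in_interval a b (f x) /\ in_interval a b (f z).
  by (split; apply/img); [exists x | exists z]; do !split=> //; move=> i.
have /img [w [[le_xw le_wz] <-]] : in_interval a b y; last by exists w.
by split=> i; [apply: leq_trans (le_fx_y i) | apply: leq_trans (le_fz_b i)].
Qed.

Section Influence.

Variables (N r : nat) (f : cube N -> cube r).

Definition toggles (c : 'I_N) (a : 'I_r) (p : cube N) : bool :=
  [&& ~~ p c, ~~ f p a & f (setc p c true) a].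

Definition influences (c : 'I_N) (a : 'I_r) : bool := [exists p, toggles c a p].

Section Monotone.

Hypothesis f_mono : monotone_cube f.

Lemma setc_noninfluential (x : cube N) c b a : ~~ influences c a -> f (setc x c b) a = f x a.
Proof.
move=> not_infl; pose p := setc x c false.
have eq_up b' : f (setc x c b') a = f p a.
  case: b'; last by [].
  have le_p := f_mono (cle_setcT p c) a; rewrite setcK in le_p.
  have : ~~ toggles c a p by apply: contra not_infl => tog; apply/existsP; exists p.
  rewrite /toggles setcK setcE eqxx /=.
  by case: (f p a) (f (setc x c true) a) le_p => [] [].
by rewrite -{2}(setc_id x c) !eq_up.
Qed.

Lemma influence_local (x y : cube N) a :
  (forall c, influences c a -> x c = y c) -> f x a = f y a.
Proof.
have [d] := ubnP (hamming x y); elim: d x => // d IH x lt_xy agree.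
have [c neq_c | eq_xy] := pickP (fun c => x c != y c); last first.
  by congr (f _ a); apply/ffunP=> c; apply/eqP/negbFE/eq_xy.
have not_infl : ~~ influences c a by apply: contra neq_c => /agree ->.
rewrite -(setc_noninfluential x (y c) not_infl); apply: IH => [|c' infl].
  rewrite -ltnS; apply: leq_trans lt_xy; apply: hamming_between_lt.
    by move=> i; rewrite setcE; have [->|_] := eqVneq i c; rewrite eqxx ?orbT.
  by apply: contra neq_c => /eqP/ffunP/(_ c); rewrite setcE eqxx => <-.
by rewrite setcE; have [->|_] := eqVneq c' c; last exact: agree.
Qed.

End Monotone.

Section Box.

Hypothesis f_box : box_morphism f.

Let f_mono : monotone_cube f := f_box.1.

Lemma toggles_step_hi c a b p p' : a != b -> toggles c a p -> toggles c b p' -> f p b ->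
  exists w, [/\ between p p' w, w != p & toggles c a w].
Proof.
move=> neq_ab /and3P[/negbTE pc0 /negbTE fpa0 fpca] /and3P[_ /negbTE fp'b0 _] fpb.
pose u : cube N := [ffun i => p i && p' i]; pose pc := setc p c true.
have le_u_p' : cle u p' by move=> i; rewrite ffunE; case: (p i) (p' i) => [] [].
have le_u_pc : cle u pc.
  by move=> i; apply: leq_trans (cle_setcT p c i); rewrite ffunE; case: (p i) (p' i) => [] [].
pose y := setc (f pc) b false.
have [w [le_uw le_wpc fw]] : exists w, [/\ cle u w, cle w pc & f w = y].
  apply: box_morphism_interval => // i; rewrite setcE; case: eqVneq => [->|_] //.
  - by apply: leq_trans (f_mono le_u_p' b) _; rewrite fp'b0.
  - exact: f_mono le_u_pc i.
have fwa : f w a by rewrite fw setcE (negbTE neq_ab).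
case wc: (w c); last first.
  have le_wp : cle w p.
    by move=> i; have := le_wpc i; rewrite setcE; case: eqVneq => [->|] //; rewrite wc.
  by have := f_mono le_wp a; rewrite fwa fpa0.
pose q := setc w c false.
have q_up : setc q c true = w by rewrite setcK -wc setc_id.
have le_qp : cle q p.
  by move=> i; have := le_wpc i; rewrite !setcE; case: eqVneq.
exists q; split.
- move=> i; have := le_qp i; have := le_uw i; rewrite !setcE ffunE.
  by case: eqVneq => [->|_]; rewrite ?pc0 //; case: (w i) (p i) (p' i) => [] [] [].
- apply/eqP=> eq_qp; have := f_mono (cle_setcT p c) b.
  by rewrite -eq_qp q_up -/pc fw setcE eqxx eq_qp fpb.
- rewrite /toggles q_up fwa setcE eqxx andbT /=.
  by have := f_mono le_qp a; rewrite fpa0; case: (f q a).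
Qed.

Lemma toggles_step_lo c a b p p' : a != b -> toggles c a p -> toggles c b p' -> ~~ f p b ->
  exists w, [/\ between p p' w, w != p & toggles c a w].
Proof.
move=> neq_ab /and3P[/negbTE pc0 /negbTE fpa0 fpca] /and3P[_ _ fp'cb] /negbTE fpb0.
pose v : cube N := [ffun i => p i || p' i]; pose vc := setc v c true.
have le_p_vc : cle p vc.
  by move=> i; rewrite setcE ffunE; case: eqVneq => // _; case: (p i) (p' i) => [] [].
have le_p'c_vc : cle (setc p' c true) vc.
  by apply: cle_setc => i; rewrite ffunE; case: (p i) (p' i) => [] [].
pose y := setc (f p) b true.
have [w [le_pw le_wvc fw]] : exists w, [/\ cle p w, cle w vc & f w = y].
  apply: box_morphism_interval => // i; rewrite setcE; case: eqVneq => [->|_] //.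
  - exact: leq_b1.
  - by have := f_mono le_p'c_vc b; rewrite fp'cb.
  - exact: f_mono le_p_vc i.
have fwa0 : f w a = false by rewrite fw setcE (negbTE neq_ab) fpa0.
case wc: (w c).
  have le_pc_w : cle (setc p c true) w.
    by move=> i; rewrite setcE; case: eqVneq => [->|_]; [rewrite wc | exact: le_pw].
  by have := f_mono le_pc_w a; rewrite fpca fwa0.
exists w; split.
- move=> i; have := le_pw i; have := le_wvc i; rewrite setcE ffunE.
  by case: eqVneq => [->|_]; rewrite ?wc ?pc0 //; case: (w i) (p i) (p' i) => [] [] [].
- by apply/eqP=> eq_wp; move: fw; rewrite eq_wp => /ffunP/(_ b); rewrite setcE eqxx fpb0.
- rewrite /toggles wc fwa0 /=.
  by have := f_mono (cle_setc c true le_pw) a; rewrite fpca; case: (f _ a).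
Qed.

Lemma influences_out_eq c a b : influences c a -> influences c b -> a = b.
Proof.
move=> /existsP[p tog_a] /existsP[p' tog_b]; apply/eqP; apply: contraT => neq_ab.
have [d] := ubnP (hamming p p'); elim: d p tog_a => // d IH p tog_a lt_pp'.
have [w [btw neq_wp tog_w]] : exists w, [/\ between p p' w, w != p & toggles c a w].
  by case: (boolP (f p b)); [apply: toggles_step_hi | apply: toggles_step_lo].
apply: IH tog_w _; rewrite -ltnS; exact: leq_trans (hamming_between_lt btw neq_wp) lt_pp'.
Qed.

End Box.

End Influence.

Lemma getn_ord N (x : cube N) (c : 'I_N) : getn x c = x c.
Proof. by rewrite /getn valK. Qed.

Lemma getn_ltn N (x : cube N) p (lt_pN : p < N) : getn x p = x (Ordinal lt_pN).
Proof. by rewrite -getn_ord. Qed.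

Lemma getn_le N (x y : cube N) p : cle x y -> getn x p <= getn y p.
Proof. by move=> le_xy; rewrite /getn; case: insub. Qed.

Lemma offset_add_leq_sum r (k : 'I_r -> nat) a : offset k a + k a <= \sum_(j < r) k j.
Proof.
rewrite /offset [X in _ <= X](bigID (fun j : 'I_r => (j < a)%N)) /= leq_add2l.
by rewrite (bigD1 a) ?ltnn //= leq_addr.
Qed.

Lemma offset_add_leq_offset r (k : 'I_r -> nat) (a a' : 'I_r) :
  (a < a')%N -> offset k a + k a <= offset k a'.
Proof.
move=> lt_aa'; rewrite /offset [X in _ <= X](bigD1 a) //= addnC leq_add2l.
apply: sub_le_big => [//|x y|j lt_ja]; first exact: leq_addr.
by rewrite (ltn_trans lt_ja lt_aa'); apply: contraTneq lt_ja => ->; rewrite ltnn.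
Qed.

Lemma getn_block_coord_perm N r (k : 'I_r -> nat) (s : {perm 'I_N}) a x c :
  offset k a <= s c < offset k a + k a ->
  getn (block k a (coord_perm s^-1 x)) (s c - offset k a) = x c.
Proof.
case/andP=> ge_sc lt_sc; have lt_j : s c - offset k a < k a by rewrite ltn_subLR.
by rewrite (getn_ltn _ lt_j) ffunE /= subnKC // getn_ord ffunE permK.
Qed.

Section BlockSort.

Variables (N r : nat) (beta : 'I_N -> 'I_r).

Definition fiber_size (a : 'I_r) : nat := #|[pred c | beta c == a]|.

Lemma sum_fiber_size : \sum_(a < r) fiber_size a = N.
Proof.
rewrite -[RHS](card_ord N) -sum1_card (partition_big beta xpredT) //=.
by apply: eq_bigr => a _; rewrite sum1_card.
Qed.

Definition block_rank (c : 'I_N) : nat :=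
  offset fiber_size (beta c) + #|[pred c' : 'I_N | (beta c' == beta c) && (c' < c)%N]|.

Lemma block_rank_bounds c :
  offset fiber_size (beta c) <= block_rank c < offset fiber_size (beta c) + fiber_size (beta c).
Proof.
rewrite leq_addr ltn_add2l; apply: proper_card; apply/properP; split.
  by apply/subsetP=> c'; rewrite !inE => /andP[].
by exists c; rewrite !inE ?eqxx ?ltnn.
Qed.

Lemma block_rank_ltN c : block_rank c < N.
Proof.
rewrite -[N]sum_fiber_size; apply: leq_trans (offset_add_leq_sum _ (beta c)).
by case/andP: (block_rank_bounds c).
Qed.

Lemma block_rank_mono c c' :
  (beta c < beta c')%N || (beta c == beta c') && (c < c')%N -> block_rank c < block_rank c'.
Proof.
case/orP=> [lt_beta | /andP[/eqP eq_beta lt_cc']].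
  case/andP: (block_rank_bounds c) => _ /leq_trans-> //.
  apply: leq_trans (offset_add_leq_offset _ lt_beta) _.
  by case/andP: (block_rank_bounds c').
rewrite /block_rank eq_beta ltn_add2l; apply: proper_card; apply/properP; split.
  by apply/subsetP=> c''; rewrite !inE => /andP[-> /ltn_trans->].
by exists c; rewrite !inE ?eq_beta ?eqxx ?ltnn.
Qed.

Lemma block_rank_inj : injective (fun c => Ordinal (block_rank_ltN c)).
Proof.
move=> c c' /(congr1 val) /= eq_rank; apply/eqP; apply: contraT => neq_cc'.
wlog lt_cc' : c c' eq_rank neq_cc' / (c < c')%N.
  move=> gen; have [lt|lt|/val_inj eq_cc'] := ltngtP c c'; first exact: gen eq_rank neq_cc' lt.
    by apply: (gen c' c) => //; rewrite eq_sym.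
  by rewrite eq_cc' eqxx in neq_cc'.
have [lt|lt|/val_inj eq_beta] := ltngtP (beta c) (beta c').
- by have := @block_rank_mono c c'; rewrite lt eq_rank ltnn => /(_ isT).
- by have := @block_rank_mono c' c; rewrite lt eq_rank ltnn => /(_ isT).
- by have := @block_rank_mono c c'; rewrite eq_beta eq_rank !ltnn eqxx lt_cc' => /(_ isT).
Qed.

Lemma block_perm_exists : exists s : {perm 'I_N}, forall c,
  offset fiber_size (beta c) <= s c < offset fiber_size (beta c) + fiber_size (beta c).
Proof. by exists (perm block_rank_inj) => c; rewrite permE; apply: block_rank_bounds. Qed.

End BlockSort.

Theorem box_morphism_cprod N r (f : cube N -> cube r) : 0 < r -> box_morphism f ->
  exists (k : 'I_r -> nat) (phis : forall a : 'I_r, cube (k a) -> bool) (s : {perm 'I_N}),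
    \sum_(a < r) k a = N /\
    (forall a, monotone_bit (phis a)) /\
    (forall x, f x = cprod phis (coord_perm s x)).
Proof.
move=> r_gt0 f_box; have f_mono := f_box.1.
pose beta c := odflt (Ordinal r_gt0) [pick a | influences f c a].
have beta_influenced c a : influences f c a -> beta c = a.
  rewrite /beta => infl; case: pickP => [a' infl' | /(_ a)]; last by rewrite infl.
  exact: (influences_out_eq f_box infl' infl).
have [s s_bounds] := block_perm_exists beta; pose k := fiber_size beta.
pose embed a (z : cube (k a)) : cube N :=
  [ffun c => (beta c == a) && getn z (s c - offset k a)].
exists k, (fun a z => f (embed a z) a), s^-1%g; split; first exact: sum_fiber_size.
split=> [a z z' le_zz' | x].
  by apply: (f_mono _ _ _ a) => c; rewrite !ffunE; case: (beta c == a); first exact: getn_le.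
apply/ffunP=> a; rewrite ffunE; apply: (influence_local f_mono) => c /beta_influenced eq_a.
by subst a; rewrite ffunE eqxx getn_block_coord_perm.
Qed.

Theorem mainTheorem9 (m n : nat) (phi : cube (m + n + 1) -> cube (n + 1)) :
  box_morphism phi ->
  (forall y, exists x, phi x = y) ->
  exists (k : 'I_(n + 1) -> nat)
         (phis : forall i : 'I_(n + 1), cube (k i) -> bool)
         (s : {perm 'I_(m + n + 1)}),
    (\sum_(i < n + 1) k i = m + n + 1)%N /\
    (forall i, monotone_bit (phis i)) /\
    (forall x, phi x = @cprod (m + n + 1) (n + 1) k phis (coord_perm s x)).
Proof.
move=> phi_box _.
by apply: box_morphism_cprod phi_box; rewrite addn1.
Qed.
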